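(* For $n\ge 4$, let $\Phi_n$ be the set of all graphs on $n$ vertices with non-negative integer weights on their edges such that every subgraph spanned by at least $4$ vertices has total weight at least $3$, and let $\phi_n$ be the minimum total weight among all graphs in $\Phi_n$. Then $$\phi_n=\left\lceil\tfrac{1}{3}n(n-2)\right\rceil.$$
   Context: The total weight of a (sub)graph is the sum of the weights of its edges; the subgraph spanned by a set of vertices consists of those vertices and all edges between them. *)

From mathcomp Require Import all_boot all_order.
Set Implicit Arguments. Unset Strict Implicit. Unset Printing Implicit Defensive.

(* A graph on n vertices with non-negative integer edge weights is encoded
   as a weight function on vertex pairs; only pairs i < j are read, so each
   unordered pair {i,j} carries exactly one weight w i j (weight 0 = no edge,
   which contributes nothing to any total weight). *)
Definition weighting (n : nat) := 'I_n -> 'I_n -> nat.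

Definition span_weight n (w : weighting n) (S : {set 'I_n}) : nat :=
  \sum_(i in S) \sum_(j in S | i < j) w i j.

Definition total_weight n (w : weighting n) : nat := span_weight w setT.

Definition in_Phi n (w : weighting n) : Prop :=
  forall S : {set 'I_n}, 4 <= #|S| -> 3 <= span_weight w S.

Definition ceil_div (a b : nat) : nat := (a + b.-1) %/ b.

From mathcomp Require Import all_boot all_order zify.
Set Implicit Arguments. Unset Strict Implicit. Unset Printing Implicit Defensive.

(** Lower bound, by strong induction on |S|: let T be a lightest triangle of S.
    If w(T) >= 2, every triangle weighs at least 2 and averaging over the
    triangles gives w(S) >= |S|(|S|-1)/3.  Otherwise the 4-vertex condition
    makes every vertex outside T send weight at least 3 - w(T) into T, so
    w(S) >= w(T) + (|S|-3)(3-w(T)) + w(S\T) >= 2|S| - 5 + phi(|S|-3) = phi(|S|)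
    (for |S| = 6 the rest S\T is a triangle, hence no lighter than T).
    Upper bound: a clique of weight-1 edges on n - b vertices next to a clique
    of weight-2 edges on b = (n+1)/3 vertices; four vertices split as x + y and
    span C(x,2) + 2 C(y,2) >= 3, while the total C(n-b,2) + 2 C(b,2) is phi(n). *)

Lemma binS2 x : 'C(x.+1, 2) = 'C(x, 2) + x.
Proof. by rewrite binS bin1. Qed.

Lemma sum_setU (T : finType) (F : T -> nat) (A B : {set T}) :
  [disjoint A & B] -> \sum_(i in A :|: B) F i = \sum_(i in A) F i + \sum_(i in B) F i.
Proof. by move=> dAB; rewrite -bigU //; apply: eq_bigl => i; rewrite !inE. Qed.

Lemma exists_subset_card (T : finType) (S : {set T}) k :
  k <= #|S| -> exists2 U : {set T}, U \subset S & #|U| = k.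
Proof.
case/card_geqP => s [uniq_s size_s sS]; exists [set x in s].
  by apply/subsetP => x; rewrite inE => /sS.
by rewrite cardsE -size_s; apply/card_uniqP.
Qed.

Section Weights.
Variables (n : nat) (w : weighting n).
Implicit Types (A B S T X : {set 'I_n}) (i j v : 'I_n).

Definition pair_weight i j : nat := if i < j then w i j else 0.

Definition cross_weight A B : nat :=
  \sum_(i in A) \sum_(j in B) (pair_weight i j + pair_weight j i).

Lemma span_weightE S :
  span_weight w S = \sum_(i in S) \sum_(j in S) pair_weight i j.
Proof. by apply: eq_bigr => i _; rewrite big_mkcondr. Qed.

Lemma span_weight_set1 v : span_weight w [set v] = 0.
Proof. by rewrite span_weightE !big_set1 /pair_weight ltnn. Qed.

Lemma cross_weightC A B : cross_weight A B = cross_weight B A.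
Proof.
rewrite /cross_weight exchange_big; apply: eq_bigr => i _.
by apply: eq_bigr => j _; rewrite addnC.
Qed.

Lemma span_weightU A B : [disjoint A & B] ->
  span_weight w (A :|: B) = span_weight w A + span_weight w B + cross_weight A B.
Proof.
move=> dAB; rewrite !span_weightE sum_setU //.
under eq_bigr do rewrite sum_setU //.
under [X in _ + X]eq_bigr do rewrite sum_setU //.
rewrite /cross_weight !big_split /=.
under [X in _ = _ + X]eq_bigr do rewrite big_split /=.
rewrite big_split /= [X in _ = _ + (_ + X)]exchange_big /=; lia.
Qed.

Lemma span_weight_setID S A : span_weight w S =
  span_weight w (S :&: A) + span_weight w (S :\: A) + cross_weight (S :&: A) (S :\: A).
Proof.
rewrite -span_weightU ?setID //.
by rewrite -setI_eq0 setDE setIACA setICr setI0.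
Qed.

Lemma span_weightD1 S v : v \in S ->
  span_weight w S = span_weight w (S :\ v) + cross_weight [set v] (S :\ v).
Proof.
move=> vS; rewrite -{1}(setD1K vS) span_weightU ?span_weight_set1 //.
by rewrite disjoints1 setD11.
Qed.

Lemma sum_cross_weightD1 S :
  \sum_(v in S) cross_weight [set v] (S :\ v) = 2 * span_weight w S.
Proof.
have deg v : v \in S ->
    cross_weight [set v] (S :\ v) = \sum_(j in S) (pair_weight v j + pair_weight j v).
  by move=> vS; rewrite /cross_weight big_set1 [RHS](big_setD1 v vS) /pair_weight ltnn.
rewrite (eq_bigr _ deg); under eq_bigr do rewrite big_split /=.
by rewrite big_split /= [X in _ + X = _]exchange_big /= span_weightE mul2n -addnn.
Qed.

Lemma sum_span_weightD1 S :
  \sum_(v in S) span_weight w (S :\ v) = (#|S| - 2) * span_weight w S.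
Proof.
have := sum_cross_weightD1 S; rewrite mulnBl -sum_nat_const.
rewrite (eq_bigr _ (fun v vS => span_weightD1 vS)) big_split /=.
by move=> ->; rewrite addnK.
Qed.

Lemma leq_cross_weight k A B :
  (forall v, v \in B -> k <= cross_weight A [set v]) -> #|B| * k <= cross_weight A B.
Proof.
move=> Hk; rewrite -sum_nat_const /cross_weight exchange_big /=.
by apply: leq_sum => v /Hk; rewrite /cross_weight; under eq_bigr do rewrite big_set1.
Qed.

Lemma span_weight_clique k X :
  (forall i j, i \in X -> j \in X -> i < j -> w i j = k) ->
  span_weight w X = k * 'C(#|X|, 2).
Proof.
move=> wX.
have deg v : v \in X -> cross_weight [set v] (X :\ v) = k * #|X|.-1.
  move=> vX; rewrite /cross_weight big_set1 (cardsD1 v X) vX mulnC -sum_nat_const.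
  apply: eq_bigr => j; rewrite !inE => /andP[jv jX]; rewrite /pair_weight.
  case: ltngtP => [vj|jv'|/val_inj vj]; rewrite ?wX ?addn0 //.
  by rewrite vj eqxx in jv.
apply/eqP; rewrite -(@eqn_pmul2l 2) // -sum_cross_weightD1; apply/eqP.
by rewrite (eq_bigr _ deg) sum_nat_const mulnCA [RHS]mulnCA -mul_bin_diag bin1.
Qed.

Lemma leq_span_weight_triangles k S : 3 <= #|S| ->
  (forall T, T \subset S -> #|T| = 3 -> k <= span_weight w T) ->
  k * 'C(#|S|, 2) <= 3 * span_weight w S.
Proof.
move Sm: #|S| => m; elim: m S Sm => // m IH S Sm S3 Hk.
case: (ltngtP m 2) => [|m_gt2|m2]; first by lia.
  have Hv v : v \in S -> k * 'C(m, 2) <= 3 * span_weight w (S :\ v).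
    move=> vS; apply: IH => //; first by have := cardsD1 v S; rewrite vS Sm => -[].
    by move=> T TS; apply: Hk; apply: subset_trans TS (subsetDl _ _).
  have : \sum_(v in S) k * 'C(m, 2) <= \sum_(v in S) 3 * span_weight w (S :\ v).
    exact: leq_sum.
  rewrite sum_nat_const -big_distrr /= sum_span_weightD1 Sm.
  rewrite mulnCA (mul_bin_down m.+1 2) mulnCA [X in _ <= X]mulnCA leq_pmul2l //.
  by rewrite subn_gt0.
have := Hk S (subxx S); rewrite Sm m2 => /(_ erefl).
by rewrite (_ : 'C(3, 2) = 3) //; lia.
Qed.

End Weights.

Definition phi (m : nat) : nat := ceil_div (m * (m - 2)) 3.

Lemma phiD3 m : phi (m + 3) = phi m + (2 * m + 1).
Proof.
case: m => [|[|m]] //; rewrite /phi /ceil_div.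
have -> : (m.+2 + 3) * (m.+2 + 3 - 2) = m.+2 * (m.+2 - 2) + 3 * (2 * m.+2 + 1).
  nia.
lia.
Qed.

Lemma phi_leq_of_bin2 m s : 2 * 'C(m, 2) <= 3 * s -> phi m <= s.
Proof.
rewrite -mul_bin_diag bin1 /phi /ceil_div.
case: m => [|[|m]] /=; [lia | lia | nia].
Qed.

Lemma phi_cut m k r : 4 <= m -> k <= 1 ->
  (7 <= m -> phi (m - 3) <= r) -> (m = 6 -> k <= r) ->
  phi m <= k + r + (m - 3) * (3 - k).
Proof.
move=> m4 k1 r_ge r6_ge; case: (ltnP m 7) => [m_lt7 | m7].
  have [->|[->|m6]] : m = 4 \/ m = 5 \/ m = 6 by lia.
  - by rewrite (_ : phi 4 = 3) //; lia.
  - by rewrite (_ : phi 5 = 5) //; lia.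
  - by move: (r6_ge m6); rewrite m6 (_ : phi 6 = 8) //; lia.
have := phiD3 (m - 3); rewrite subnK ?(leq_trans _ m7) // => ->.
by move: (r_ge m7); case: k k1 {r6_ge} => [|[|]] //; lia.
Qed.

Section LowerBound.
Variables (n : nat) (w : weighting n).
Hypothesis wPhi : in_Phi w.
Implicit Types (S T U : {set 'I_n}) (v : 'I_n).

Lemma cross_weight_triangle_vertex T v : #|T| = 3 -> v \notin T ->
  3 - span_weight w T <= cross_weight w T [set v].
Proof.
move=> T3 vT; have := wPhi (S := v |: T); rewrite cardsU1 vT T3 => /(_ erefl).
by rewrite span_weightU ?disjoints1 // span_weight_set1 cross_weightC; lia.
Qed.

Lemma span_weight_cut_triangle S T : T \subset S -> #|T| = 3 ->
  span_weight w T + span_weight w (S :\: T) + (#|S| - 3) * (3 - span_weight w T)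
    <= span_weight w S.
Proof.
move=> TS T3; rewrite [X in _ <= X](span_weight_setID _ _ T) (setIidPr TS).
have -> : #|S| - 3 = #|S :\: T| by rewrite cardsDS // T3.
rewrite leq_add2l; apply: leq_cross_weight => v; rewrite inE => /andP[vT _].
exact: cross_weight_triangle_vertex.
Qed.

Lemma phi_leq_span_weight S : 4 <= #|S| -> phi #|S| <= span_weight w S.
Proof.
move Sm: #|S| => m; elim/ltn_ind: m S Sm => m IH S Sm m4.
have /exists_subset_card[T0 T0S T03] : 3 <= #|S| by rewrite Sm ltnW.
case: (@arg_minnP _ T0 (fun T => (T \subset S) && (#|T| == 3)) (span_weight w)).
  by rewrite T0S T03 eqxx.
move=> T /andP[TS /eqP T3] Tmin.
have T_min U : U \subset S -> #|U| = 3 -> span_weight w T <= span_weight w U.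
  by move=> US U3; apply: Tmin; rewrite US U3 eqxx.
case: (leqP 2 (span_weight w T)) => [T_ge2 | T_le1].
  apply: phi_leq_of_bin2; rewrite -Sm.
  apply: leq_span_weight_triangles; first by rewrite Sm ltnW.
  by move=> U US U3; apply: leq_trans T_ge2 (T_min U US U3).
have cardD : #|S :\: T| = m - 3 by rewrite cardsDS // Sm T3.
apply: leq_trans (span_weight_cut_triangle TS T3); rewrite Sm.
apply: phi_cut => // [m7 | m6].
  by apply: IH; [lia | exact: cardD | lia].
by apply: T_min; [exact: subsetDl | rewrite cardD m6].
Qed.

End LowerBound.

Definition two_cliques n (A : {set 'I_n}) : weighting n := fun i j =>
  if (i \in A) && (j \in A) then 1 else if (i \notin A) && (j \notin A) then 2 else 0.

Lemma span_two_cliques n (A S : {set 'I_n}) :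
  span_weight (two_cliques A) S = 'C(#|S :&: A|, 2) + 2 * 'C(#|S :\: A|, 2).
Proof.
rewrite (span_weight_setID _ _ A) (span_weight_clique (k := 1)); last first.
  by move=> i j; rewrite !inE /two_cliques => /andP[_ ->] /andP[_ ->].
rewrite (span_weight_clique (k := 2)); last first.
  by move=> i j; rewrite !inE /two_cliques => /andP[/negbTE-> _] /andP[/negbTE-> _].
rewrite mul1n (_ : cross_weight _ _ _ = 0) ?addn0 //.
apply: big1 => i; rewrite inE => /andP[_ iA]; apply: big1 => j.
rewrite inE => /andP[/negbTE jA _].
by rewrite /pair_weight /two_cliques iA jA /= !if_same.
Qed.

Lemma two_cliques_in_Phi n (A : {set 'I_n}) : in_Phi (two_cliques A).
Proof.
move=> S; rewrite span_two_cliques -(cardsID A S).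
move: #|S :&: A| #|S :\: A| => x y xy4.
rewrite -(leq_pmul2l (isT : 0 < 2)) mulnDr -!mul_bin_diag !bin1.
nia.
Qed.

Lemma phi_two_cliques n : phi n = 'C(n - (n + 1) %/ 3, 2) + 2 * 'C((n + 1) %/ 3, 2).
Proof.
elim/ltn_ind: n => n IH; case: (ltnP n 3) => [|n3]; first by case: n {IH} => [|[|[|]]].
have [m Em] : exists m, n = m + 3 by exists (n - 3); rewrite subnK.
rewrite Em phiD3 IH; last by lia.
have -> : (m + 3 + 1) %/ 3 = ((m + 1) %/ 3).+1 by lia.
have -> : m + 3 - ((m + 1) %/ 3).+1 = (m - (m + 1) %/ 3).+2 by lia.
have : (m + 1) %/ 3 <= m by lia.
rewrite !binS2; move: ((m + 1) %/ 3) => b; lia.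
Qed.

Theorem theorem7p5 (n : nat) (hn : 4 <= n) :
  (exists w : weighting n, in_Phi w /\ total_weight w = ceil_div (n * (n - 2)) 3) /\
  (forall w : weighting n, in_Phi w -> ceil_div (n * (n - 2)) 3 <= total_weight w).
Proof.
split=> [|w wPhi]; last first.
  by have := phi_leq_span_weight wPhi (S := [set: _]); rewrite cardsT card_ord; apply.
have /exists_subset_card[A _ cardA] : n - (n + 1) %/ 3 <= #|[set: 'I_n]|.
  by rewrite cardsT card_ord leq_subr.
exists (two_cliques A); split; first exact: two_cliques_in_Phi.
have cardAC : #|~: A| = (n + 1) %/ 3.
  by have := cardsC A; rewrite cardA card_ord; lia.
by rewrite /total_weight span_two_cliques setTI setTD cardA cardAC -phi_two_cliques.
Qed.
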